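(* Let the problem, the cone $\mathcal{C}$, the algorithm $\widetilde A$ and the complexity be as in the context, and assume $n_0\ge1$. Assume $$R=\sup_{k\in\mathbb{N}}\frac{\lambda_{n_{k-1}}}{\lambda_{n_k}}<\infty.$$ Then $\mathrm{cost}(\widetilde A,\mathcal{C},\varepsilon,\rho)$ is essentially no worse than $\mathrm{comp}(\mathcal{A}(\mathcal{C}),\varepsilon,\rho)$. That is, there is a number $\omega>0$, depending only on $a$, $b$ and $R$, such that $$\mathrm{cost}(\widetilde A,\mathcal{C},\varepsilon,\rho)\le\mathrm{comp}(\mathcal{A}(\mathcal{C}),\omega\varepsilon,\rho)\quad\text{for all }\varepsilon,\rho>0.$$
   Context: Let $\mathcal{F}$ and $\mathcal{G}$ be separable Hilbert spaces with orthonormal bases $(u_i)_{i\in\mathbb{N}}$ and $(v_i)_{i\in\mathbb{N}}$. Write $f=\sum_i\widehat f_iu_i$ with $\|f\|_{\mathcal{F}}=\|(\widehat f_i)_i\|_{\ell^2}$, and similarly for $\mathcal{G}$. Let $S:\mathcal{F}\to\mathcal{G}$ be the linear operator $S(f)=\sum_i\lambda_i\widehat f_iv_i$, where $\lambda_1\ge\lambda_2\ge\cdots>0$ and $\lambda_i\to0$. For $n\ge0$ let $A_n(f)=\sum_{i=1}^n\lambda_i\widehat f_iv_i$; it uses the $n$ values $\widehat f_1,\dots,\widehat f_n$. Let $\mathcal{B}_\rho=\{f:\|f\|_{\mathcal{F}}\le\rho\}$. For $\mathcal{H}\subseteq\mathcal{F}$, $\mathcal{A}(\mathcal{H})$ is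 the set of deterministic algorithms $A:\mathcal{H}\times(0,\infty)\to\mathcal{G}$ with $\|S(f)-A(f,\varepsilon)\|_{\mathcal{G}}\le\varepsilon$ for all $f\in\mathcal{H}$ and all $\varepsilon>0$. Such an algorithm adaptively samples finitely many bounded linear functionals of $f$, and its output depends on $f$ only through those values. Costs are defined as follows: - $\mathrm{cost}(A,f,\varepsilon)$ is the number of functional values used; - $\mathrm{cost}(A,\mathcal{H},\varepsilon,\rho)=\sup\{\mathrm{cost}(A,f,\varepsilon):f\in\mathcal{H}\cap\mathcal{B}_\rho\}$; - $\mathrm{comp}(\mathcal{A}(\mathcal{H}),\varepsilon,\rho)=\min_{A\in\mathcal{A}(\mathcal{H})}\mathrm{cost}(A,\mathcal{H},\varepsilon,\rho)$. Let $n_0<n_1<\cdots$ be a strictly increasing, unbounded sequence of non-negative integers. For $j\in\mathbb{N}=\{1,2,\dots\}$ let $\sigma_j(f)=\|(\lambda_i\widehat f_i)_{i=n_{j-1}+1}^{n_j}\|_{\ell^2}$. Fix $0<b<1<a$ and let $\mathcal{C}=\{f\in\mathcal{F}:\sigma_{j+r}(f)\le ab^r\sigma_j(f)\ \forall j,r\in\mathbb{N}\}$. The algorithm $\widetilde A$ works as follows. Given $f\in\mathcal{C}$ and $\varepsilon>0$, for $j=1,2,\dots$ it computes $\sigma_j(f)$. At the first $j$ with $\sigma_j(f)\le\varepsilon\sqrt{1-b^2}/(ab)$, it returns $A_{n_j}(f)$. *)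

From Stdlib Require Import Reals List.
From Coquelicot Require Import Coquelicot.
Import ListNotations.
Open Scope R_scope.

(* Coordinates are 0-based: paper index i (>=1) corresponds to index i-1 here.
   Elements of F and G are represented by their coefficient sequences
   (identification via the orthonormal bases, an isometric isomorphism
   F ~ l^2, G ~ l^2). *)

Definition l2 (f : nat -> R) : Prop := ex_series (fun i => f i ^ 2).
Definition nrm (f : nat -> R) : R := sqrt (Series (fun i => f i ^ 2)).

Definition bounded_linear (L : (nat -> R) -> R) : Prop :=
  (forall f g, l2 f -> l2 g -> L (fun i => f i + g i) = L f + L g) /\
  (forall c f, l2 f -> L (fun i => c * f i) = c * L f) /\
  (exists C, forall f, l2 f -> Rabs (L f) <= C * nrm f).

(* The solution operator S(f) = sum_i lam_i f_i v_i. *)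
Definition Sop (lam : nat -> R) (f : nat -> R) : nat -> R := fun i => lam i * f i.

(* A deterministic adaptive algorithm: given the tolerance eps and the list
   of functional values observed so far, it chooses the next functional,
   decides whether to stop, and (when stopping) produces its output, which
   depends on f only through the observed values. *)
Record algorithm := {
  query : R -> list R -> ((nat -> R) -> R);
  stop : R -> list R -> Prop;
  output : R -> list R -> (nat -> R) }.

Fixpoint data (A : algorithm) (eps : R) (f : nat -> R) (k : nat) : list R :=
  match k with
  | O => []
  | S k => let d := data A eps f k in d ++ [query A eps d f]
  end.

Definition stops_at (A : algorithm) (eps : R) (f : nat -> R) (k : nat) : Prop :=
  stop A eps (data A eps f k) /\
  (forall k', (k' < k)%nat -> ~ stop A eps (data A eps f k')).

Definition well_formed (A : algorithm) : Prop :=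
  forall eps d, 0 < eps -> bounded_linear (query A eps d) /\ l2 (output A eps d).

Definition solves (lam : nat -> R) (H : (nat -> R) -> Prop) (A : algorithm) : Prop :=
  well_formed A /\
  forall f eps, H f -> 0 < eps ->
    exists k, stops_at A eps f k /\
      nrm (fun i => Sop lam f i - output A eps (data A eps f k) i) <= eps.

Definition cost (A : algorithm) (H : (nat -> R) -> Prop) (eps rho : R) : Rbar :=
  Lub_Rbar (fun x => exists f k, H f /\ nrm f <= rho /\ stops_at A eps f k /\ x = INR k).

(* comp(A(H), eps, rho) = min over A in A(H) of cost(A, H, eps, rho)
   (+oo if no algorithm has finite cost) *)
Definition complexity (lam : nat -> R) (H : (nat -> R) -> Prop) (eps rho : R) : Rbar :=
  Glb_Rbar (fun x => exists A, solves lam H A /\ cost A H eps rho = Finite x).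

(* sigma_j(f) for j >= 1: l^2 norm of (lam_i f_i) over paper indices
   n_{j-1}+1 .. n_j, i.e. 0-based indices n_{j-1} .. n_j - 1. *)
Definition sigma (lam : nat -> R) (nseq : nat -> nat) (f : nat -> R) (j : nat) : R :=
  sqrt (sum_n_m (fun i => (lam i * f i) ^ 2) (nseq (j - 1)%nat) (nseq j - 1)%nat).

Definition inC (lam : nat -> R) (nseq : nat -> nat) (a b : R) (f : nat -> R) : Prop :=
  l2 f /\
  forall j r, (1 <= j)%nat -> (1 <= r)%nat ->
    sigma lam nseq f (j + r) <= a * b ^ r * sigma lam nseq f j.

Definition Atilde (lam : nat -> R) (nseq : nat -> nat) (a b : R) : algorithm :=
  {| query := fun eps d => fun f => f (length d);
     stop := fun eps d =>
       exists j, (1 <= j)%nat /\ nseq j = length d /\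
         sigma lam nseq (fun i => nth i d 0) j <= eps * sqrt (1 - b ^ 2) / (a * b);
     output := fun eps d => fun i =>
       if (i <? length d)%nat then lam i * nth i d 0 else 0 |}.

(* paper ratio lam_{n_{k-1}} / lam_{n_k}, k >= 1, in 0-based indexing *)
Definition ratio (lam : nat -> R) (nseq : nat -> nat) (k : nat) : R :=
  lam (nseq (k - 1)%nat - 1)%nat / lam (nseq k - 1)%nat.

From Pilot Require Import Defs.
From Stdlib Require Import Reals List Lia Lra Psatz Arith Classical FunctionalExtensionality.
From Coquelicot Require Import Coquelicot.
Open Scope R_scope.

(* If [Atilde] stops on [f] in [C] with [nrm f <= rho] after [n_J] samples, we exhibit [f0] in
   [C] with [nrm f0 <= rho] on which every algorithm of [A(C)] run with tolerance [omega * eps]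
   also samples at least [n_J] values.  For [J = 1] take [f0 = 0].  For [J >= 2], [f0] has
   [sigma_i(f0) = K b^i] on the first [J] blocks and is robust: [f0 + h] and [f0 - h] stay in
   [C] whenever [h] lives on the first [n_J] coordinates and [nrm (S h) = delta K b^J].  An
   algorithm sampling fewer than [n_J] linear functionals on [f0] leaves such an [h] in the
   kernel of everything it sees, so it answers identically on [f0 + h] and [f0 - h], and the
   parallelogram law gives [nrm (S h) <= omega * eps].  This is contradictory because [Atilde]
   did not stop at block [J - 1]: there [sigma_(J-1)(f)] exceeded the threshold, which by the
   cone condition and the bound [R] on the ratios makes [rho] large compared with [eps]. *)

Lemma sum_n_m_split (u : nat -> R) (n m k : nat) : (n <= S m)%nat -> (m <= k)%nat ->
  sum_n_m u n k = sum_n_m u n m + sum_n_m u (S m) k.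
Proof. intros Hnm Hmk. exact (sum_n_m_Chasles u n m k Hnm Hmk). Qed.

Lemma sum_n_m_eq_zero (u : nat -> R) (n m : nat) :
  (forall k, (n <= k <= m)%nat -> u k = 0) -> sum_n_m u n m = 0.
Proof.
  intros Hu. rewrite (sum_n_m_ext_loc u (fun _ => zero)) by exact Hu.
  apply (sum_n_m_const_zero (G := R_AbelianMonoid)).
Qed.

Lemma sum_n_m_nonneg (u : nat -> R) (n m : nat) :
  (forall k, 0 <= u k) -> 0 <= sum_n_m u n m.
Proof.
  intros Hu. apply Rle_trans with (sum_n_m (fun _ => 0) n m).
  - right. symmetry. apply (sum_n_m_const_zero (G := R_AbelianMonoid)).
  - apply sum_n_m_le. exact Hu.
Qed.

Lemma sum_n_m_le_loc (u v : nat -> R) (n m : nat) :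
  (forall k, (n <= k <= m)%nat -> u k <= v k) -> sum_n_m u n m <= sum_n_m v n m.
Proof.
  intros Huv. destruct (le_lt_dec n m) as [Hnm | Hmn].
  - rewrite !sum_n_m_Reals by exact Hnm. apply sum_Rle. intros k Hk. apply Huv. lia.
  - rewrite !sum_n_m_zero by exact Hmn. apply Rle_refl.
Qed.

Lemma sum_n_m_scal (c : R) (u : nat -> R) (n m : nat) :
  sum_n_m (fun k => c * u k) n m = c * sum_n_m u n m.
Proof. exact (sum_n_m_mult_l (K := R_Ring) c u n m). Qed.

Lemma sum_n_m_lin (u v : nat -> R) (c d : R) (n m : nat) :
  sum_n_m (fun k => c * u k + d * v k) n m = c * sum_n_m u n m + d * sum_n_m v n m.
Proof.
  rewrite (sum_n_m_plus (G := R_AbelianMonoid) (fun k => c * u k) (fun k => d * v k)).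
  rewrite <- sum_n_m_scal, <- (sum_n_m_scal d v). reflexivity.
Qed.

Lemma is_series_finite_support (u : nat -> R) (N : nat) :
  (forall k, (N < k)%nat -> u k = 0) -> is_series u (sum_n u N).
Proof.
  intros Hu. apply filterlim_ext_loc with (fun _ => sum_n u N).
  - exists N. intros n Hn. simpl. unfold sum_n.
    rewrite (sum_n_m_Chasles _ 0 N n) by lia.
    rewrite (sum_n_m_ext_loc _ (fun _ => zero) (S N) n) by (intros k Hk; apply Hu; lia).
    rewrite sum_n_m_const_zero, plus_zero_r. reflexivity.
  - apply filterlim_const.
Qed.

Lemma ex_series_finite_support (u : nat -> R) (N : nat) :
  (forall k, (N < k)%nat -> u k = 0) -> ex_series u.
Proof. intros Hu. eexists. exact (is_series_finite_support u N Hu). Qed.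

Lemma Series_finite_support (u : nat -> R) (N : nat) :
  (forall k, (N < k)%nat -> u k = 0) -> Series u = sum_n u N.
Proof. intros Hu. apply is_series_unique, is_series_finite_support, Hu. Qed.

Lemma Series_const_zero : Series (fun _ => 0) = 0.
Proof.
  rewrite (Series_finite_support _ 0%nat) by reflexivity.
  unfold sum_n. rewrite sum_n_n. reflexivity.
Qed.

Lemma sum_n_m_le_Series (u : nat -> R) (p q : nat) :
  (forall k, 0 <= u k) -> ex_series u -> sum_n_m u p q <= Series u.
Proof.
  intros Hu Hex.
  set (v := fun k => if (k <=? q)%nat then u k else 0).
  assert (Hv : Series v = sum_n u q).
  { rewrite (Series_finite_support v q).
    - apply sum_n_m_ext_loc. intros k Hk. unfold v.
      rewrite (proj2 (Nat.leb_le k q)) by lia. reflexivity.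
    - intros k Hk. unfold v. rewrite (proj2 (Nat.leb_gt k q)) by lia. reflexivity. }
  assert (Hvu : Series v <= Series u).
  { apply Series_le; [|exact Hex]. intros k. unfold v.
    destruct (k <=? q)%nat; split; auto with real. }
  assert (Hpref : sum_n_m u p q <= sum_n u q).
  { unfold sum_n. destruct p as [|p]; [apply Rle_refl|].
    destruct (le_lt_dec (S p) q) as [Hpq | Hqp].
    - rewrite (sum_n_m_split u 0 p q) by lia.
      pose proof (sum_n_m_nonneg u 0 p Hu). lra.
    - rewrite sum_n_m_zero by exact Hqp. apply sum_n_m_nonneg, Hu. }
  lra.
Qed.

Lemma l2_plus (f g : nat -> R) : l2 f -> l2 g -> l2 (fun i => f i + g i).
Proof.
  intros Hf Hg.
  apply (ex_series_le (K := R_AbsRing) (V := R_CompleteNormedModule))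
    with (fun i => 2 * f i ^ 2 + 2 * g i ^ 2).
  - intros n. change (Rabs ((f n + g n) ^ 2) <= 2 * f n ^ 2 + 2 * g n ^ 2).
    pose proof (pow2_ge_0 (f n - g n)). rewrite Rabs_pos_eq by apply pow2_ge_0. nra.
  - apply (ex_series_plus (fun i => 2 * f i ^ 2) (fun i => 2 * g i ^ 2)).
    + exact (ex_series_scal_l 2 (fun i => f i ^ 2) Hf).
    + exact (ex_series_scal_l 2 (fun i => g i ^ 2) Hg).
Qed.

Lemma l2_scal (c : R) (f : nat -> R) : l2 f -> l2 (fun i => c * f i).
Proof.
  intros Hf. unfold l2 in *. apply ex_series_ext with (fun i => f i ^ 2 * c ^ 2).
  - intros i. simpl. ring.
  - apply ex_series_scal_r, Hf.
Qed.

Lemma l2_finite_support (f : nat -> R) (N : nat) :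
  (forall m, (N <= m)%nat -> f m = 0) -> l2 f.
Proof.
  intros Hf. apply ex_series_finite_support with N.
  intros k Hk. rewrite Hf by lia. ring.
Qed.

Lemma Series_sq_nonneg (f : nat -> R) : l2 f -> 0 <= Series (fun i => f i ^ 2).
Proof.
  intros Hf. apply Rle_trans with (sum_n_m (fun i => f i ^ 2) 1 0).
  - right. symmetry. apply (sum_n_m_zero (G := R_AbelianMonoid)). lia.
  - apply sum_n_m_le_Series; [intros k; apply pow2_ge_0 | exact Hf].
Qed.

Lemma Series_parallelogram (u v : nat -> R) : l2 u -> l2 v ->
  Series (fun i => (u i + v i) ^ 2) + Series (fun i => (u i - v i) ^ 2)
  = 2 * Series (fun i => u i ^ 2) + 2 * Series (fun i => v i ^ 2).
Proof.
  intros Hu Hv.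
  assert (Hsum : l2 (fun i => u i + v i)) by (apply l2_plus; assumption).
  assert (Hdiff : l2 (fun i => u i - v i)).
  { eapply ex_series_ext; [| exact (l2_plus u _ Hu (l2_scal (-1) v Hv))].
    intros i. simpl. ring. }
  rewrite <- Series_plus by assumption.
  rewrite <- !Series_scal_l, <- Series_plus.
  - apply Series_ext. intros i. ring.
  - exact (ex_series_scal_l 2 (fun i => u i ^ 2) Hu).
  - exact (ex_series_scal_l 2 (fun i => v i ^ 2) Hv).
Qed.

Lemma pow_le_pow_le_1 (x : R) (m n : nat) : 0 <= x <= 1 -> (m <= n)%nat -> x ^ n <= x ^ m.
Proof.
  intros Hx Hmn. replace n with (m + (n - m))%nat by lia. rewrite pow_add.
  assert (x ^ (n - m) <= 1) by (rewrite <- (pow1 (n - m)); apply pow_incr; lra).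
  pose proof (pow_le x m (proj1 Hx)). nra.
Qed.

Lemma le_sq_of_sqrt_le (x e : R) : sqrt x <= e -> x <= e ^ 2.
Proof.
  intros Hx. destruct (Rle_lt_dec 0 x) as [Hx0 | Hx0].
  - rewrite <- (pow2_sqrt x Hx0). pose proof (sqrt_pos x). apply pow_incr. lra.
  - pose proof (pow2_ge_0 e). lra.
Qed.

Lemma le_mul_sq_of_sqrt_le (x y c : R) : 0 <= x -> 0 <= y -> sqrt x <= c * sqrt y -> x <= c ^ 2 * y.
Proof.
  intros Hx Hy Hxy. rewrite <- (pow2_sqrt x Hx), <- (pow2_sqrt y Hy).
  replace (c ^ 2 * sqrt y ^ 2) with ((c * sqrt y) ^ 2) by ring.
  apply pow_incr. split; [apply sqrt_pos | exact Hxy].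
Qed.

Lemma sqrt_le_mul_sqrt (x y c : R) : 0 <= c -> 0 <= y -> x <= c ^ 2 * y -> sqrt x <= c * sqrt y.
Proof.
  intros Hc Hy Hxy. rewrite <- (sqrt_pow2 c Hc).
  rewrite <- sqrt_mult by (auto using pow2_ge_0). apply sqrt_le_1_alt, Hxy.
Qed.

Lemma sq_lt_of_lt_sqrt (x y : R) : 0 <= x -> x < sqrt y -> x ^ 2 < y.
Proof.
  intros Hx Hxy. destruct (Rle_lt_dec 0 y) as [Hy | Hy].
  - rewrite <- (pow2_sqrt y Hy). nra.
  - rewrite sqrt_neg_0 in Hxy by lra. lra.
Qed.

Lemma sq_add_le (x y d : R) : 0 < d -> (x + y) ^ 2 <= (1 + d) * x ^ 2 + (1 + / d) * y ^ 2.
Proof.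
  intros Hd.
  assert (E : (1 + d) * x ^ 2 + (1 + / d) * y ^ 2 - (x + y) ^ 2 = (d * x - y) ^ 2 / d)
    by (field; lra).
  assert (0 <= (d * x - y) ^ 2 / d)
    by (apply Rdiv_le_0_compat; [apply pow2_ge_0 | exact Hd]).
  lra.
Qed.

Lemma sq_add_ge (x y d : R) : 0 < d -> (1 - d) * x ^ 2 - / d * y ^ 2 <= (x + y) ^ 2.
Proof.
  intros Hd.
  assert (E : (x + y) ^ 2 - ((1 - d) * x ^ 2 - / d * y ^ 2) = (d * x + y) ^ 2 / d + y ^ 2)
    by (field; lra).
  assert (0 <= (d * x + y) ^ 2 / d)
    by (apply Rdiv_le_0_compat; [apply pow2_ge_0 | exact Hd]).
  pose proof (pow2_ge_0 y). lra.
Qed.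

(** * A common kernel vector of finitely many linear functionals *)

Definition linear_on_l2 (L : (nat -> R) -> R) : Prop :=
  (forall f g, l2 f -> l2 g -> L (fun i => f i + g i) = L f + L g) /\
  (forall c f, l2 f -> L (fun i => c * f i) = c * L f).

Definition supported_in (h : nat -> R) (js : list nat) : Prop :=
  forall j, ~ In j js -> h j = 0.

Definition unit_vec (i : nat) : nat -> R := fun j => if Nat.eqb j i then 1 else 0.

Lemma l2_supported_in (h : nat -> R) (js : list nat) : supported_in h js -> l2 h.
Proof.
  intros Hh. apply l2_finite_support with (S (list_max js)).
  intros m Hm. apply Hh. intros Hin.
  assert (Hmax : List.Forall (fun k => (k <= list_max js)%nat) js) by (apply list_max_le; lia).
  rewrite List.Forall_forall in Hmax. specialize (Hmax m Hin). lia.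
Qed.

Lemma l2_unit_vec (i : nat) : l2 (unit_vec i).
Proof.
  apply l2_finite_support with (S i). intros m Hm. unfold unit_vec.
  destruct (Nat.eqb_spec m i); [lia | reflexivity].
Qed.

Lemma unit_vec_supported_in (i : nat) (js : list nat) : In i js -> supported_in (unit_vec i) js.
Proof.
  intros Hi j Hj. unfold unit_vec.
  destruct (Nat.eqb_spec j i) as [-> | _]; [contradiction | reflexivity].
Qed.

Lemma linear_on_l2_zero (L : (nat -> R) -> R) : linear_on_l2 L -> L (fun _ => 0) = 0.
Proof.
  intros [_ Hscal].
  assert (Hl2 : l2 (fun _ : nat => 0)) by (apply l2_finite_support with 0%nat; auto).
  transitivity (L (fun i => 0 * (fun _ : nat => 0) i)).
  - f_equal. apply functional_extensionality. intros i. ring.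
  - rewrite Hscal by exact Hl2. ring.
Qed.

Lemma linear_on_l2_supported_in (L : (nat -> R) -> R) (js : list nat) :
  linear_on_l2 L -> (forall i, In i js -> L (unit_vec i) = 0) ->
  forall h, supported_in h js -> L h = 0.
Proof.
  intros HL. induction js as [|i js IH]; intros Hunit h Hh.
  - replace h with (fun _ : nat => 0)
      by (apply functional_extensionality; intros j; symmetry; apply Hh; auto).
    apply linear_on_l2_zero, HL.
  - set (h' := fun j => if Nat.eqb j i then 0 else h j).
    assert (Hh' : supported_in h' js).
    { intros j Hj. unfold h'. destruct (Nat.eqb_spec j i); [reflexivity|].
      apply Hh. intros [E | E]; auto. }
    replace h with (fun j => h' j + h i * unit_vec i j)
      by (apply functional_extensionality; intros j; unfold h', unit_vec;
          destruct (Nat.eqb_spec j i); subst; ring).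
    destruct HL as [Hadd Hscal].
    assert (Hh'l2 : l2 h') by (apply l2_supported_in with js; exact Hh').
    rewrite Hadd, Hscal by auto using l2_scal, l2_unit_vec.
    rewrite IH, Hunit; [ring | left; reflexivity | | exact Hh'].
    intros j Hj. apply Hunit. right. exact Hj.
Qed.

Definition kernel_proj (L : (nat -> R) -> R) (i : nat) (x : nat -> R) : nat -> R :=
  fun j => x j + - (L x / L (unit_vec i)) * unit_vec i j.

Section KernelProjection.

Variables (L : (nat -> R) -> R) (i : nat).
Hypothesis L_linear : linear_on_l2 L.
Hypothesis L_unit_vec : L (unit_vec i) <> 0.

Lemma l2_kernel_proj (x : nat -> R) : l2 x -> l2 (kernel_proj L i x).
Proof.
  intros Hx. apply (l2_plus x (fun j => - (L x / L (unit_vec i)) * unit_vec i j)); [exact Hx|].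
  apply l2_scal, l2_unit_vec.
Qed.

Lemma kernel_proj_off (x : nat -> R) (j : nat) : j <> i -> kernel_proj L i x j = x j.
Proof.
  intros Hji. unfold kernel_proj, unit_vec.
  destruct (Nat.eqb_spec j i); [contradiction | ring].
Qed.

Lemma kernel_proj_ker (x : nat -> R) : l2 x -> L (kernel_proj L i x) = 0.
Proof.
  intros Hx. destruct L_linear as [Hadd Hscal]. unfold kernel_proj.
  rewrite (Hadd x (fun j => - (L x / L (unit_vec i)) * unit_vec i j)), Hscal
    by auto using l2_scal, l2_unit_vec.
  field. exact L_unit_vec.
Qed.

Lemma kernel_proj_supported_in (x : nat -> R) (js1 js2 : list nat) :
  supported_in x (js1 ++ js2) -> supported_in (kernel_proj L i x) (js1 ++ i :: js2).
Proof.
  intros Hx j Hj. destruct (Nat.eq_dec j i) as [-> | Hji].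
  - exfalso. apply Hj, in_or_app. right. left. reflexivity.
  - rewrite kernel_proj_off by exact Hji. apply Hx. intros Hin. apply Hj.
    apply in_app_or in Hin. apply in_or_app. destruct Hin; [left | right; right]; assumption.
Qed.

Lemma linear_on_l2_kernel_proj (M : (nat -> R) -> R) :
  linear_on_l2 M -> linear_on_l2 (fun x => M (kernel_proj L i x)).
Proof.
  intros [Madd Mscal]. destruct L_linear as [Hadd Hscal]. split.
  - intros f g Hf Hg. rewrite <- Madd by auto using l2_kernel_proj. f_equal.
    apply functional_extensionality. intros j. unfold kernel_proj.
    rewrite Hadd by assumption. field. exact L_unit_vec.
  - intros c f Hf. rewrite <- Mscal by auto using l2_kernel_proj. f_equal.
    apply functional_extensionality. intros j. unfold kernel_proj.
    rewrite Hscal by assumption. field. exact L_unit_vec.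
Qed.

End KernelProjection.

Lemma common_kernel_nonzero (Ls : list ((nat -> R) -> R)) (js : list nat) :
  (forall L, In L Ls -> linear_on_l2 L) -> NoDup js -> (length Ls < length js)%nat ->
  exists h, supported_in h js /\ (exists j, h j <> 0) /\ (forall L, In L Ls -> L h = 0).
Proof.
  remember (length Ls) as n eqn:Hn. revert Ls js Hn.
  induction n as [|n IH]; intros Ls js Hn Hlin Hnd Hlen.
  - destruct Ls; [|discriminate].
    destruct js as [|i js]; [simpl in Hlen; lia|].
    exists (unit_vec i). split; [|split].
    + apply unit_vec_supported_in. left. reflexivity.
    + exists i. unfold unit_vec. rewrite Nat.eqb_refl. lra.
    + intros L [].
  - destruct Ls as [|L Ls]; [discriminate|]. injection Hn as Hn. simpl in Hlen.
    assert (HL : linear_on_l2 L) by (apply Hlin; left; reflexivity).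
    assert (HLs : forall M, In M Ls -> linear_on_l2 M)
      by (intros M HM; apply Hlin; right; exact HM).
    destruct (classic (exists i, In i js /\ L (unit_vec i) <> 0)) as [[i [Hi HLi]] | Hnone].
    + destruct (in_split i js Hi) as [js1 [js2 ->]].
      destruct (NoDup_remove _ _ _ Hnd) as [Hnd' Hi'].
      destruct (IH (map (fun M x => M (kernel_proj L i x)) Ls) (js1 ++ js2))
        as [g [Hg [[j0 Hj0] Hker]]].
      * rewrite length_map. exact Hn.
      * intros M' HM'. apply in_map_iff in HM'. destruct HM' as [M [<- HM]].
        apply linear_on_l2_kernel_proj; auto.
      * exact Hnd'.
      * rewrite length_app in *. simpl in Hlen. lia.
      * assert (Hj0i : j0 <> i) by (intros ->; apply Hj0, Hg, Hi').
        exists (kernel_proj L i g). split; [|split].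
        -- apply kernel_proj_supported_in, Hg.
        -- exists j0. rewrite kernel_proj_off by exact Hj0i. exact Hj0.
        -- intros M [<- | HM].
           ++ apply kernel_proj_ker; [exact HL | exact HLi |].
              apply l2_supported_in with (js1 ++ js2). exact Hg.
           ++ apply (Hker (fun x => M (kernel_proj L i x))). apply in_map_iff. exists M. auto.
    + destruct (IH Ls js Hn HLs Hnd ltac:(lia)) as [h [Hh [Hnz Hker]]].
      exists h. split; [|split]; auto.
      intros M [<- | HM]; [|auto].
      apply (linear_on_l2_supported_in L js HL); [|exact Hh].
      intros i Hi. apply NNPP. intros HLi. apply Hnone. exists i. auto.
Qed.

(** * Fooling adaptive algorithms *)

Lemma solves_linear_queries (lam : nat -> R) (H : (nat -> R) -> Prop) (A : algorithm) (e : R) :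
  solves lam H A -> 0 < e -> forall d, linear_on_l2 (query A e d).
Proof.
  intros [Hwf _] He d. destruct (Hwf e d He) as [[Hadd [Hscal _]] _]. split; assumption.
Qed.

Lemma data_add_kernel (A : algorithm) (e : R) (f h : nat -> R) (k : nat) :
  (forall d, linear_on_l2 (query A e d)) -> l2 f -> l2 h ->
  (forall m, (m < k)%nat -> query A e (data A e f m) h = 0) ->
  forall m, (m <= k)%nat -> data A e (fun i => f i + h i) m = data A e f m.
Proof.
  intros Hlin Hf Hh Hker m. induction m as [|m IH]; intros Hm; [reflexivity|].
  simpl. rewrite IH by lia. destruct (Hlin (data A e f m)) as [Hadd _].
  rewrite Hadd, Hker by (auto || lia). rewrite Rplus_0_r. reflexivity.
Qed.

Lemma stops_at_unique (A : algorithm) (e : R) (f : nat -> R) (k1 k2 : nat) :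
  stops_at A e f k1 -> stops_at A e f k2 -> k1 = k2.
Proof.
  intros [H1 H1'] [H2 H2'].
  destruct (Nat.lt_trichotomy k1 k2) as [L | [L | L]]; [exfalso | exact L | exfalso].
  - exact (H2' k1 L H1).
  - exact (H1' k2 L H2).
Qed.

Lemma stops_at_data_ext (A : algorithm) (e : R) (f g : nat -> R) (k : nat) :
  (forall m, (m <= k)%nat -> data A e g m = data A e f m) ->
  stops_at A e f k -> stops_at A e g k.
Proof.
  intros Hdata [Hstop Hbefore]. split.
  - rewrite Hdata by lia. exact Hstop.
  - intros m Hm. rewrite Hdata by lia. exact (Hbefore m Hm).
Qed.

(* [A] cannot tell [f + h] from [f - h], so it returns the same output for both; the
   parallelogram law then bounds [S h] by the tolerance. *)
Lemma solves_kernel_bound (lam : nat -> R) (H : (nat -> R) -> Prop) (A : algorithm)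
    (e : R) (f h : nat -> R) (k : nat) :
  solves lam H A -> 0 < e -> l2 f -> l2 h -> l2 (Sop lam f) -> l2 (Sop lam h) ->
  H (fun i => f i + h i) -> H (fun i => f i - h i) -> stops_at A e f k ->
  (forall m, (m < k)%nat -> query A e (data A e f m) h = 0) ->
  Series (fun i => Sop lam h i ^ 2) <= e ^ 2.
Proof.
  intros Hsol He Hf Hh HSf HSh Hplus Hminus Hstop Hker.
  assert (Hlin := solves_linear_queries lam H A e Hsol He).
  set (O := output A e (data A e f k)).
  assert (Herr : forall g, H g -> (forall m, (m <= k)%nat -> data A e g m = data A e f m) ->
            Series (fun i => (Sop lam g i - O i) ^ 2) <= e ^ 2).
  { intros g Hg Hdata. destruct (proj2 Hsol g e Hg He) as [k' [Hstop' Hnrm]].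
    rewrite (stops_at_unique A e g k' k Hstop' (stops_at_data_ext A e f g k Hdata Hstop)) in Hnrm.
    rewrite Hdata in Hnrm by lia. apply le_sq_of_sqrt_le, Hnrm. }
  assert (Hopp : l2 (fun i => -1 * h i)) by (apply l2_scal, Hh).
  assert (Hker_opp : forall m, (m < k)%nat -> query A e (data A e f m) (fun i => -1 * h i) = 0).
  { intros m Hm. destruct (Hlin (data A e f m)) as [_ Hscal].
    rewrite Hscal, Hker by assumption. ring. }
  assert (Hminus_data : forall m, (m <= k)%nat -> data A e (fun i => f i - h i) m = data A e f m).
  { intros m Hm. rewrite <- (data_add_kernel A e f _ k Hlin Hf Hopp Hker_opp m Hm).
    f_equal. apply functional_extensionality. intros i. ring. }
  assert (HO : l2 O) by exact (proj2 (proj1 Hsol e _ He)).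
  set (u := fun i => Sop lam f i - O i).
  assert (Hu : l2 u).
  { eapply ex_series_ext; [| exact (l2_plus _ _ HSf (l2_scal (-1) O HO))].
    intros i. unfold u. simpl. ring. }
  assert (Hup := Herr _ Hplus (data_add_kernel A e f h k Hlin Hf Hh Hker)).
  assert (Hdown := Herr _ Hminus Hminus_data).
  rewrite (Series_ext _ (fun i => (u i + Sop lam h i) ^ 2)) in Hup
    by (intros i; unfold u, Sop; ring).
  rewrite (Series_ext _ (fun i => (u i - Sop lam h i) ^ 2)) in Hdown
    by (intros i; unfold u, Sop; ring).
  pose proof (Series_parallelogram u (Sop lam h) Hu HSh).
  pose proof (Series_sq_nonneg u Hu).
  lra.
Qed.

Lemma Series_Sop_scal (lam h : nat -> R) (c : R) :
  Series (fun i => Sop lam (fun j => c * h j) i ^ 2) = c ^ 2 * Series (fun i => Sop lam h i ^ 2).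
Proof.
  rewrite <- Series_scal_l. apply Series_ext. intros i. unfold Sop. ring.
Qed.

Lemma queries_kernel_vector (lam : nat -> R) (A : algorithm) (e T : R) (f : nat -> R) (k N : nat) :
  (forall i, 0 < lam i) -> (forall d, linear_on_l2 (query A e d)) -> (k < N)%nat ->
  exists h, (forall m, (N <= m)%nat -> h m = 0) /\
    Series (fun i => Sop lam h i ^ 2) = T ^ 2 /\
    (forall m, (m < k)%nat -> query A e (data A e f m) h = 0).
Proof.
  intros Hlam Hlin HkN.
  destruct (common_kernel_nonzero (map (fun m => query A e (data A e f m)) (seq 0 k)) (seq 0 N))
    as [h [Hsupp [[j Hj] Hker]]].
  { intros L HL. apply in_map_iff in HL. destruct HL as [m [<- _]]. apply Hlin. }
  { apply seq_NoDup. }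
  { rewrite length_map, !length_seq. exact HkN. }
  assert (Hh0 : forall m, (N <= m)%nat -> h m = 0).
  { intros m Hm. apply Hsupp. rewrite in_seq. lia. }
  assert (HSh : l2 (Sop lam h)).
  { apply l2_finite_support with N. intros m Hm. unfold Sop. rewrite Hh0 by exact Hm. ring. }
  set (X := Series (fun i => Sop lam h i ^ 2)).
  assert (HX : 0 < X).
  { apply Rlt_le_trans with (sum_n_m (fun i => Sop lam h i ^ 2) j j).
    - rewrite sum_n_n. unfold Sop. apply pow2_gt_0.
      apply Rmult_integral_contrapositive. split; [apply Rgt_not_eq, Hlam | exact Hj].
    - apply sum_n_m_le_Series; [intros i; apply pow2_ge_0 | exact HSh]. }
  set (c := T / sqrt X).
  exists (fun i => c * h i). split; [|split].
  - intros m Hm. rewrite Hh0 by exact Hm. ring.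
  - rewrite Series_Sop_scal. fold X. unfold c, Rdiv.
    rewrite Rpow_mult_distr, pow_inv, pow2_sqrt by lra. field. lra.
  - intros m Hm. destruct (Hlin (data A e f m)) as [_ Hscal].
    rewrite Hscal by (apply l2_finite_support with N; exact Hh0).
    rewrite Hker; [ring|]. apply in_map_iff. exists m. rewrite in_seq. split; [reflexivity | lia].
Qed.

Lemma solves_samples_ge (lam : nat -> R) (H : (nat -> R) -> Prop) (A : algorithm)
    (e T : R) (f : nat -> R) (k N : nat) :
  (forall i, 0 < lam i) -> solves lam H A -> 0 < e -> e < T ->
  l2 f -> l2 (Sop lam f) -> stops_at A e f k ->
  (forall h, (forall m, (N <= m)%nat -> h m = 0) ->
     Series (fun i => Sop lam h i ^ 2) = T ^ 2 ->
     H (fun i => f i + h i) /\ H (fun i => f i - h i)) ->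
  (N <= k)%nat.
Proof.
  intros Hlam Hsol He HeT Hf HSf Hstop Hpert.
  apply Nat.nlt_ge. intros HkN.
  assert (Hlin := solves_linear_queries lam H A e Hsol He).
  destruct (queries_kernel_vector lam A e T f k N Hlam Hlin HkN) as [h [Hh0 [HSh Hker]]].
  destruct (Hpert h Hh0 HSh) as [Hplus Hminus].
  assert (Hl2 : l2 h /\ l2 (Sop lam h)).
  { split; apply l2_finite_support with N; intros m Hm; [|unfold Sop];
      rewrite Hh0 by exact Hm; ring. }
  assert (T ^ 2 <= e ^ 2).
  { rewrite <- HSh. apply (solves_kernel_bound lam H A e f h k); tauto. }
  nra.
Qed.

Lemma cost_le_complexity (lam : nat -> R) (H : (nat -> R) -> Prop) (A0 : algorithm)
    (eps e rho : R) :
  (forall f k, H f -> nrm f <= rho -> stops_at A0 eps f k ->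
     forall A, solves lam H A ->
     exists f0 k0, H f0 /\ nrm f0 <= rho /\ stops_at A e f0 k0 /\ (k <= k0)%nat) ->
  Rbar_le (cost A0 H eps rho) (complexity lam H e rho).
Proof.
  intros Hhard. apply (proj2 (Lub_Rbar_correct _)).
  intros x [f [k [Hf [Hnrm [Hstop ->]]]]].
  apply (proj2 (Glb_Rbar_correct _)).
  intros y [A [Hsol Hcost]].
  destruct (Hhard f k Hf Hnrm Hstop A Hsol) as [f0 [k0 [Hf0 [Hnrm0 [Hstop0 Hk]]]]].
  assert (Hk0 : Rbar_le (INR k0) (cost A H e rho)).
  { apply (proj1 (Lub_Rbar_correct _)). exists f0, k0. auto. }
  rewrite Hcost in Hk0. simpl in *. apply le_INR in Hk. lra.
Qed.

(** * The cone and its hard instances *)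

Section Problem.

Variables (lam : nat -> R) (nseq : nat -> nat) (a b : R).
Hypothesis lam_pos : forall i, 0 < lam i.
Hypothesis nseq_incr : forall k, (nseq k < nseq (S k))%nat.
Hypothesis nseq0_pos : (1 <= nseq 0)%nat.
Hypothesis b_range : 0 < b < 1.
Hypothesis a_gt_1 : 1 < a.

Lemma nseq_lt (i j : nat) : (i < j)%nat -> (nseq i < nseq j)%nat.
Proof.
  intros Hij. induction Hij as [|j Hij IH]; [apply nseq_incr|].
  specialize (nseq_incr j). lia.
Qed.

Lemma nseq_le (i j : nat) : (i <= j)%nat -> (nseq i <= nseq j)%nat.
Proof.
  intros Hij. destruct (Nat.eq_dec i j) as [-> | Hne]; [lia|].
  apply Nat.lt_le_incl, nseq_lt. lia.
Qed.

Lemma nseq_pos (i : nat) : (1 <= nseq i)%nat.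
Proof. pose proof (nseq_le 0 i ltac:(lia)). lia. Qed.

Lemma sum_n_m_blocks (u : nat -> R) (J : nat) :
  sum_n_m u (nseq 0) (nseq J - 1)
  = sum_n_m (fun i => sum_n_m u (nseq (i - 1)) (nseq i - 1)) 1 J.
Proof.
  induction J as [|J IH].
  - rewrite !sum_n_m_eq_zero by lia. reflexivity.
  - pose proof (nseq_incr J). pose proof (nseq_le 0 J ltac:(lia)).
    rewrite (sum_n_m_split u (nseq 0) (nseq J - 1)) by lia.
    rewrite IH, (sum_n_m_split _ 1 J (S J)), sum_n_n by lia.
    replace (S (nseq J - 1)) with (nseq J) by lia.
    replace (S J - 1)%nat with J by lia. reflexivity.
Qed.

Fixpoint spike (c : nat -> R) (J : nat) : nat -> R :=
  match J with
  | O => fun _ => 0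
  | S J' => fun m => if Nat.eqb (S m) (nseq (S J')) then c (S J') else spike c J' m
  end.

Lemma spike_off (c : nat -> R) (J m : nat) :
  (forall i, (1 <= i <= J)%nat -> S m <> nseq i) -> spike c J m = 0.
Proof.
  induction J as [|J IH]; intros Hoff; [reflexivity|]. cbn [spike].
  destruct (Nat.eqb_spec (S m) (nseq (S J))) as [E | _].
  - exfalso. apply (Hoff (S J)); [lia | exact E].
  - apply IH. intros i Hi. apply Hoff. lia.
Qed.

Lemma spike_at (c : nat -> R) (J i : nat) : (1 <= i <= J)%nat -> spike c J (nseq i - 1) = c i.
Proof.
  induction J as [|J IH]; intros Hi; [lia|]. cbn [spike]. pose proof (nseq_pos i).
  destruct (Nat.eqb_spec (S (nseq i - 1)) (nseq (S J))) as [E | Hne].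
  - assert (i = S J) as ->; [|reflexivity].
    destruct (Nat.lt_trichotomy i (S J)) as [Hlt | [Heq | Hgt]]; [| exact Heq | lia].
    pose proof (nseq_lt i (S J) Hlt). lia.
  - apply IH. split; [lia|]. destruct (Nat.eq_dec i (S J)) as [-> | ]; [lia | lia].
Qed.

Lemma spike_zero_above (c : nat -> R) (J m : nat) : (nseq J <= m)%nat -> spike c J m = 0.
Proof.
  intros Hm. apply spike_off. intros i Hi. pose proof (nseq_le i J ltac:(lia)). lia.
Qed.

Lemma sum_spike_block (w c : nat -> R) (J i : nat) : (1 <= i <= J)%nat ->
  sum_n_m (fun m => (w m * spike c J m) ^ 2) (nseq (i - 1)) (nseq i - 1)
  = (w (nseq i - 1)%nat * c i) ^ 2.
Proof.
  intros Hi. pose proof (nseq_pos (i - 1)). pose proof (nseq_incr (i - 1)).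
  replace (S (i - 1)) with i in * by lia.
  rewrite (sum_n_m_split _ (nseq (i - 1)) (nseq i - 2) (nseq i - 1)) by lia.
  replace (S (nseq i - 2)) with (nseq i - 1)%nat by lia.
  rewrite sum_n_n, spike_at by exact Hi.
  rewrite sum_n_m_eq_zero; [simpl; ring|].
  intros m Hm. rewrite spike_off; [ring|]. intros i' Hi'.
  destruct (le_lt_dec i' (i - 1)) as [Hle | Hlt].
  - pose proof (nseq_le i' (i - 1) Hle). lia.
  - pose proof (nseq_le i i' ltac:(lia)). lia.
Qed.

Lemma Series_spike_sq (c : nat -> R) (J : nat) :
  Series (fun m => spike c J m ^ 2) = sum_n_m (fun i => c i ^ 2) 1 J.
Proof.
  pose proof (nseq_le 0 J ltac:(lia)).
  rewrite (Series_finite_support _ (nseq J - 1))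
    by (intros k Hk; rewrite spike_zero_above by lia; ring).
  unfold sum_n. rewrite (sum_n_m_split _ 0 (nseq 0 - 1) (nseq J - 1)) by lia.
  rewrite sum_n_m_eq_zero.
  2: { intros m Hm. rewrite spike_off; [ring|].
       intros i Hi. pose proof (nseq_lt 0 i ltac:(lia)). lia. }
  replace (S (nseq 0 - 1)) with (nseq 0) by lia.
  rewrite sum_n_m_blocks, Rplus_0_l. apply sum_n_m_ext_loc. intros i Hi.
  rewrite <- (Rmult_1_l (c i)), <- (sum_spike_block (fun _ => 1) c J i Hi).
  apply sum_n_m_ext. intros m. simpl. ring.
Qed.

Definition sigma_sq (f : nat -> R) (j : nat) : R :=
  sum_n_m (fun i => (lam i * f i) ^ 2) (nseq (j - 1)) (nseq j - 1).

Lemma sigma_sq_nonneg (f : nat -> R) (j : nat) : 0 <= sigma_sq f j.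
Proof. apply sum_n_m_nonneg. intros k. apply pow2_ge_0. Qed.

Lemma sigma_sq_zero_above (g : nat -> R) (J j : nat) :
  (forall m, (nseq J <= m)%nat -> g m = 0) -> (J < j)%nat -> sigma_sq g j = 0.
Proof.
  intros Hg Hj. apply sum_n_m_eq_zero. intros k Hk.
  pose proof (nseq_le J (j - 1) ltac:(lia)). rewrite Hg by lia. ring.
Qed.

Lemma sigma_sq_le_Series (h : nat -> R) (j : nat) :
  l2 (Sop lam h) -> sigma_sq h j <= Series (fun i => Sop lam h i ^ 2).
Proof. intros Hh. apply sum_n_m_le_Series; [intros k; apply pow2_ge_0 | exact Hh]. Qed.

Lemma sigma_sq_add_le (g h : nat -> R) (d Y : R) (j : nat) :
  0 < d -> sigma_sq g j <= Y -> sigma_sq h j <= d ^ 2 * Y ->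
  sigma_sq (fun m => g m + h m) j <= (1 + d) ^ 2 * Y.
Proof.
  intros Hd Hg Hh. assert (Hd' : 0 < / d) by (apply Rinv_0_lt_compat, Hd).
  apply Rle_trans with ((1 + d) * sigma_sq g j + (1 + / d) * sigma_sq h j).
  - unfold sigma_sq. rewrite <- sum_n_m_lin. apply sum_n_m_le. intros k.
    replace (lam k * (g k + h k)) with (lam k * g k + lam k * h k) by ring.
    apply sq_add_le, Hd.
  - replace ((1 + d) ^ 2 * Y) with ((1 + d) * Y + (1 + / d) * (d ^ 2 * Y)) by (field; lra).
    apply Rplus_le_compat; apply Rmult_le_compat_l; lra.
Qed.

Lemma sigma_sq_add_ge (g h : nat -> R) (d Y : R) (j : nat) :
  0 < d -> Y <= sigma_sq g j -> sigma_sq h j <= d ^ 2 * Y ->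
  (1 - 2 * d) * sigma_sq g j <= sigma_sq (fun m => g m + h m) j.
Proof.
  intros Hd Hg Hh. assert (Hd' : 0 < / d) by (apply Rinv_0_lt_compat, Hd).
  assert (Hsmall : / d * sigma_sq h j <= d * sigma_sq g j).
  { apply Rle_trans with (/ d * (d ^ 2 * Y)); [apply Rmult_le_compat_l; lra|].
    replace (/ d * (d ^ 2 * Y)) with (d * Y) by (field; lra).
    apply Rmult_le_compat_l; lra. }
  apply Rle_trans with ((1 - d) * sigma_sq g j + - / d * sigma_sq h j); [lra|].
  unfold sigma_sq. rewrite <- sum_n_m_lin. apply sum_n_m_le. intros k.
  replace (lam k * (g k + h k)) with (lam k * g k + lam k * h k) by ring.
  pose proof (sq_add_ge (lam k * g k) (lam k * h k) d Hd). lra.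
Qed.

Definition delta : R := (a ^ 2 - 1) / (2 * a ^ 2 + 3).

(* The second bound reduces to [(a^2 + 4) (a^2 - 1) >= 0]. *)
Lemma delta_bounds : 0 < delta /\ (1 + delta) ^ 2 <= a ^ 2 * (1 - 2 * delta).
Proof.
  unfold delta. assert (Ha2 : 1 < a ^ 2) by nra. split.
  - apply Rdiv_lt_0_compat; lra.
  - replace (1 + (a ^ 2 - 1) / (2 * a ^ 2 + 3)) with ((3 * a ^ 2 + 2) / (2 * a ^ 2 + 3))
      by (field; lra).
    replace (a ^ 2 * (1 - 2 * ((a ^ 2 - 1) / (2 * a ^ 2 + 3))))
      with ((5 * a ^ 2 * (2 * a ^ 2 + 3)) / (2 * a ^ 2 + 3) ^ 2) by (field; lra).
    unfold Rdiv. rewrite Rpow_mult_distr, pow_inv.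
    apply Rmult_le_compat_r; [apply Rlt_le, Rinv_0_lt_compat, pow_lt; lra | nra].
Qed.

Lemma cone_perturbation_sq (g h : nat -> R) (K : R) (J j r : nat) :
  (1 <= j)%nat -> (j + r <= J)%nat ->
  (forall i, (1 <= i <= J)%nat -> sigma_sq g i = (K * b ^ i) ^ 2) ->
  (forall i, sigma_sq h i <= (delta * K * b ^ J) ^ 2) ->
  sigma_sq (fun m => g m + h m) (j + r) <= (a * b ^ r) ^ 2 * sigma_sq (fun m => g m + h m) j.
Proof.
  intros Hj Hjr Hsg Hsh. destruct delta_bounds as [Hd Hda].
  set (Y := (K * b ^ (j + r)) ^ 2).
  assert (Hbr : (b ^ r) ^ 2 <= 1).
  { rewrite <- (pow1 2). apply pow_incr.
    split; [apply pow_le; lra | apply (pow_le_pow_le_1 b 0 r); [lra | lia]]. }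
  assert (HYj : Y = (b ^ r) ^ 2 * sigma_sq g j)
    by (unfold Y; rewrite Hsg, pow_add by lia; ring).
  assert (HYj' : Y <= sigma_sq g j).
  { rewrite HYj. pose proof (sigma_sq_nonneg g j). nra. }
  assert (Hhr : forall i, sigma_sq h i <= delta ^ 2 * Y).
  { intros i. eapply Rle_trans; [apply Hsh|]. unfold Y.
    replace ((delta * K * b ^ J) ^ 2) with (delta ^ 2 * K ^ 2 * (b ^ J) ^ 2) by ring.
    replace (delta ^ 2 * (K * b ^ (j + r)) ^ 2)
      with (delta ^ 2 * K ^ 2 * (b ^ (j + r)) ^ 2) by ring.
    apply Rmult_le_compat_l; [apply Rmult_le_pos; apply pow2_ge_0|].
    apply pow_incr. split; [apply pow_le; lra | apply pow_le_pow_le_1; [lra | exact Hjr]]. }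
  assert (Hup := sigma_sq_add_le g h delta Y (j + r) Hd
                   ltac:(unfold Y; rewrite Hsg by lia; lra) (Hhr _)).
  assert (Hlo := sigma_sq_add_ge g h delta Y j Hd HYj' (Hhr _)).
  assert (Hscale : 0 <= (b ^ r) ^ 2 * sigma_sq g j)
    by (apply Rmult_le_pos; [apply pow2_ge_0 | apply sigma_sq_nonneg]).
  eapply Rle_trans; [exact Hup|]. rewrite HYj.
  apply Rle_trans with (a ^ 2 * (b ^ r) ^ 2 * ((1 - 2 * delta) * sigma_sq g j)).
  - replace (a ^ 2 * (b ^ r) ^ 2 * ((1 - 2 * delta) * sigma_sq g j))
      with (a ^ 2 * (1 - 2 * delta) * ((b ^ r) ^ 2 * sigma_sq g j)) by ring.
    apply Rmult_le_compat_r; assumption.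
  - replace ((a * b ^ r) ^ 2) with (a ^ 2 * (b ^ r) ^ 2) by ring.
    apply Rmult_le_compat_l; [apply Rmult_le_pos; apply pow2_ge_0 | exact Hlo].
Qed.

Lemma cone_perturbation (g h : nat -> R) (K : R) (J : nat) :
  (forall m, (nseq J <= m)%nat -> g m = 0) -> (forall m, (nseq J <= m)%nat -> h m = 0) ->
  (forall i, (1 <= i <= J)%nat -> sigma_sq g i = (K * b ^ i) ^ 2) ->
  (forall i, sigma_sq h i <= (delta * K * b ^ J) ^ 2) ->
  inC lam nseq a b (fun m => g m + h m).
Proof.
  intros Hg Hh Hsg Hsh.
  assert (Hgh : forall m, (nseq J <= m)%nat -> g m + h m = 0).
  { intros m Hm. rewrite Hg, Hh by exact Hm. ring. }
  split; [apply l2_finite_support with (nseq J); exact Hgh|].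
  intros j r Hj Hr.
  change (sqrt (sigma_sq (fun m => g m + h m) (j + r))
          <= a * b ^ r * sqrt (sigma_sq (fun m => g m + h m) j)).
  apply sqrt_le_mul_sqrt;
    [apply Rmult_le_pos; [lra | apply pow_le; lra] | apply sigma_sq_nonneg|].
  destruct (le_lt_dec (j + r) J) as [Hjr | Hjr].
  - apply (cone_perturbation_sq g h K J); assumption.
  - rewrite (sigma_sq_zero_above _ J) by assumption.
    apply Rmult_le_pos; [apply pow2_ge_0 | apply sigma_sq_nonneg].
Qed.

Definition spike_weight (i : nat) : R := b ^ i / lam (nseq i - 1).

Definition spike_norm_sq (J : nat) : R := sum_n_m (fun i => spike_weight i ^ 2) 1 J.

(* [sigma_i = K b^i] on the first [J] blocks: the slowest decay the cone permits, up to the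
   slack factor [a] that absorbs perturbations.  Each block carries its mass on its last
   coordinate, the index at which [ratio] compares values of [lam]. *)
Definition hard_instance (K : R) (J : nat) : nat -> R := spike (fun i => K * spike_weight i) J.

Lemma sigma_sq_hard_instance (K : R) (J i : nat) : (1 <= i <= J)%nat ->
  sigma_sq (hard_instance K J) i = (K * b ^ i) ^ 2.
Proof.
  intros Hi. unfold sigma_sq, hard_instance. rewrite sum_spike_block by exact Hi.
  unfold spike_weight. f_equal. field. apply Rgt_not_eq, lam_pos.
Qed.

Lemma Series_hard_instance_sq (K : R) (J : nat) :
  Series (fun m => hard_instance K J m ^ 2) = K ^ 2 * spike_norm_sq J.
Proof.
  unfold hard_instance, spike_norm_sq. rewrite Series_spike_sq.
  rewrite <- sum_n_m_scal. apply sum_n_m_ext. intros i. simpl. ring.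
Qed.

Lemma spike_norm_sq_pos (J : nat) : (1 <= J)%nat -> 0 < spike_norm_sq J.
Proof.
  intros HJ. unfold spike_norm_sq.
  rewrite (sum_n_m_split _ 1 1 J), sum_n_n by lia.
  assert (0 < spike_weight 1 ^ 2).
  { apply pow_lt, Rdiv_lt_0_compat; [apply pow_lt; lra | apply lam_pos]. }
  assert (0 <= sum_n_m (fun i => spike_weight i ^ 2) 2 J)
    by (apply sum_n_m_nonneg; intros; apply pow2_ge_0).
  lra.
Qed.

Lemma inC_hard_instance_perturbation (K : R) (J : nat) (h : nat -> R) :
  (forall m, (nseq J <= m)%nat -> h m = 0) ->
  Series (fun i => Sop lam h i ^ 2) <= (delta * K * b ^ J) ^ 2 ->
  inC lam nseq a b (fun m => hard_instance K J m + h m).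
Proof.
  intros Hh HS. apply (cone_perturbation _ _ K J).
  - intros m Hm. apply spike_zero_above, Hm.
  - exact Hh.
  - apply sigma_sq_hard_instance.
  - intros i. eapply Rle_trans; [apply sigma_sq_le_Series | exact HS].
    apply l2_finite_support with (nseq J). intros m Hm. unfold Sop. rewrite Hh by exact Hm. ring.
Qed.

Lemma inC_hard_instance (K : R) (J : nat) : inC lam nseq a b (hard_instance K J).
Proof.
  replace (hard_instance K J) with (fun m => hard_instance K J m + 0)
    by (apply functional_extensionality; intros m; ring).
  apply inC_hard_instance_perturbation; [reflexivity|].
  rewrite (Series_ext _ (fun _ => 0)), Series_const_zero by (intros i; unfold Sop; ring).
  apply pow2_ge_0.
Qed.

Lemma nrm_hard_instance (K : R) (J : nat) :
  0 <= K -> nrm (hard_instance K J) = K * sqrt (spike_norm_sq J).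
Proof.
  intros HK. unfold nrm. rewrite Series_hard_instance_sq, sqrt_mult_alt, sqrt_pow2 by
    (assumption || apply pow2_ge_0).
  reflexivity.
Qed.

Lemma inC_first_block (h : nat -> R) :
  (forall m, (nseq 1 <= m)%nat -> h m = 0) -> inC lam nseq a b h.
Proof.
  intros Hh. split; [apply l2_finite_support with (nseq 1); exact Hh|].
  intros j r Hj Hr.
  change (sqrt (sigma_sq h (j + r)) <= a * b ^ r * sqrt (sigma_sq h j)).
  rewrite (sigma_sq_zero_above h 1) by (assumption || lia). rewrite sqrt_0.
  apply Rmult_le_pos; [apply Rmult_le_pos; [lra | apply pow_le; lra] | apply sqrt_pos].
Qed.

Lemma data_Atilde (eps : R) (f : nat -> R) (k : nat) :
  length (data (Atilde lam nseq a b) eps f k) = k /\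
  forall i, (i < k)%nat -> nth i (data (Atilde lam nseq a b) eps f k) 0 = f i.
Proof.
  induction k as [|k [Hlen Hnth]]; [split; [reflexivity | intros; lia]|].
  simpl. rewrite length_app, Hlen. split; [simpl; lia|].
  intros i Hi. destruct (Nat.eq_dec i k) as [-> | Hne].
  - rewrite app_nth2, Hlen, Nat.sub_diag by lia. reflexivity.
  - rewrite app_nth1 by lia. apply Hnth. lia.
Qed.

Lemma Atilde_stops_at_block (eps : R) (f : nat -> R) (k : nat) :
  stops_at (Atilde lam nseq a b) eps f k ->
  exists J, (1 <= J)%nat /\ nseq J = k /\
    ((2 <= J)%nat -> eps * sqrt (1 - b ^ 2) / (a * b) < Defs.sigma lam nseq f (J - 1)).
Proof.
  intros [[J [HJ [Hk Hsig]]] Hbefore].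
  rewrite (proj1 (data_Atilde eps f k)) in Hk.
  exists J. split; [exact HJ|]. split; [exact Hk|]. intros HJ2.
  apply Rnot_le_lt. intros Hle.
  apply (Hbefore (nseq (J - 1))); [rewrite <- Hk; apply nseq_lt; lia|].
  destruct (data_Atilde eps f (nseq (J - 1))) as [Hlen Hnth].
  exists (J - 1)%nat. split; [lia|]. split; [symmetry; exact Hlen|].
  unfold Defs.sigma. rewrite (sum_n_m_ext_loc _ (fun i => (lam i * f i) ^ 2)); [exact Hle|].
  intros i Hi. pose proof (nseq_pos (J - 1)). rewrite Hnth by lia. reflexivity.
Qed.

Lemma sigma_sq_gt_threshold (f : nat -> R) (eps : R) (j : nat) : 0 < eps ->
  eps * sqrt (1 - b ^ 2) / (a * b) < Defs.sigma lam nseq f j ->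
  eps ^ 2 * (1 - b ^ 2) < a ^ 2 * b ^ 2 * sigma_sq f j.
Proof.
  intros Heps Hthr. assert (Hab : 0 < a ^ 2 * b ^ 2) by (apply Rmult_lt_0_compat; nra).
  apply sq_lt_of_lt_sqrt in Hthr.
  - replace ((eps * sqrt (1 - b ^ 2) / (a * b)) ^ 2) with (eps ^ 2 * (1 - b ^ 2) / (a ^ 2 * b ^ 2))
      in Hthr by (unfold Rdiv; rewrite !Rpow_mult_distr, pow2_sqrt by nra; field; lra).
    replace (eps ^ 2 * (1 - b ^ 2))
      with (eps ^ 2 * (1 - b ^ 2) / (a ^ 2 * b ^ 2) * (a ^ 2 * b ^ 2)) by (field; lra).
    rewrite (Rmult_comm (a ^ 2 * b ^ 2)). apply Rmult_lt_compat_r; assumption.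
  - apply Rdiv_le_0_compat; [apply Rmult_le_pos; [lra | apply sqrt_pos] | nra].
Qed.

Lemma zero_instance_samples_ge (A : algorithm) (e rho : R) :
  solves lam (inC lam nseq a b) A -> 0 < e -> 0 <= rho ->
  exists f0 k0, inC lam nseq a b f0 /\ nrm f0 <= rho /\ stops_at A e f0 k0 /\ (nseq 1 <= k0)%nat.
Proof.
  intros Hsol He Hrho.
  assert (Hf0 : inC lam nseq a b (fun _ => 0)) by (apply inC_first_block; reflexivity).
  destruct (proj2 Hsol _ e Hf0 He) as [k0 [Hstop _]].
  exists (fun _ => 0), k0. split; [exact Hf0|]. split; [|split; [exact Hstop|]].
  - unfold nrm. rewrite (Series_ext _ (fun _ => 0)), Series_const_zero, sqrt_0 by (intros; ring).
    exact Hrho.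
  - apply (solves_samples_ge lam (inC lam nseq a b) A e (e + 1) (fun _ => 0) k0 (nseq 1));
      auto; try lra.
    + apply l2_finite_support with 0%nat. reflexivity.
    + apply l2_finite_support with 0%nat. intros m _. unfold Sop. ring.
    + intros h Hh _. split; apply inC_first_block; intros m Hm; rewrite Hh by exact Hm; ring.
Qed.

Lemma hard_instance_samples_ge (A : algorithm) (e rho : R) (J : nat) :
  solves lam (inC lam nseq a b) A -> 0 < e -> 0 < rho -> (1 <= J)%nat ->
  e ^ 2 * spike_norm_sq J < (delta * rho * b ^ J) ^ 2 ->
  exists f0 k0, inC lam nseq a b f0 /\ nrm f0 <= rho /\ stops_at A e f0 k0 /\ (nseq J <= k0)%nat.
Proof.
  intros Hsol He Hrho HJ Hgap.
  assert (HU0 : 0 < spike_norm_sq J) by (apply spike_norm_sq_pos, HJ).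
  assert (HU : 0 < sqrt (spike_norm_sq J)) by (apply sqrt_lt_R0, HU0).
  set (K := rho / sqrt (spike_norm_sq J)).
  assert (HK : 0 < K) by (apply Rdiv_lt_0_compat; assumption).
  set (f0 := hard_instance K J).
  assert (Hf0z : forall m, (nseq J <= m)%nat -> f0 m = 0)
    by (intros m Hm; apply spike_zero_above, Hm).
  destruct (proj2 Hsol f0 e (inC_hard_instance K J) He) as [k0 [Hstop _]].
  exists f0, k0. split; [apply inC_hard_instance|]. split; [|split; [exact Hstop|]].
  - unfold f0. rewrite nrm_hard_instance by lra. unfold K. right. field. lra.
  - assert (Heta : e < delta * K * b ^ J).
    { assert (Hrhs : 0 < delta * rho * b ^ J).
      { destruct delta_bounds as [Hd _]. pose proof (pow_lt b J (proj1 b_range)).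
        apply Rmult_lt_0_compat; [apply Rmult_lt_0_compat|]; assumption. }
      rewrite <- (pow2_sqrt (spike_norm_sq J)), <- Rpow_mult_distr in Hgap by lra.
      assert (e * sqrt (spike_norm_sq J) < delta * rho * b ^ J).
      { destruct (Rlt_or_le (e * sqrt (spike_norm_sq J)) (delta * rho * b ^ J));
          [assumption | nra]. }
      apply (Rmult_lt_reg_r (sqrt (spike_norm_sq J))); [exact HU|].
      replace (delta * K * b ^ J * sqrt (spike_norm_sq J)) with (delta * rho * b ^ J)
        by (unfold K; field; lra).
      assumption. }
    apply (solves_samples_ge lam (inC lam nseq a b) A e (delta * K * b ^ J) f0 k0 (nseq J)); auto.
    + apply l2_finite_support with (nseq J). exact Hf0z.
    + apply l2_finite_support with (nseq J).
      intros m Hm. unfold Sop. rewrite Hf0z by exact Hm. ring.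
    + intros h Hh HS. split.
      * apply inC_hard_instance_perturbation; [exact Hh | right; exact HS].
      * replace (fun i => f0 i - h i) with (fun i => hard_instance K J i + - h i)
          by (apply functional_extensionality; intros i; unfold f0; ring).
        apply inC_hard_instance_perturbation; [intros m Hm; rewrite Hh by exact Hm; ring|].
        right. etransitivity; [|exact HS]. apply Series_ext. intros i. unfold Sop. ring.
Qed.

(** * Consequences of the ratio bound *)

Section RatioBound.

Variable Rs : R.
Hypothesis lam_antitone : forall i, lam (S i) <= lam i.
Hypothesis ratio_le : forall k, (1 <= k)%nat -> ratio lam nseq k <= Rs.

Lemma lam_le (i j : nat) : (i <= j)%nat -> lam j <= lam i.
Proof.
  intros Hij. induction Hij as [|j Hij IH]; [lra|]. specialize (lam_antitone j). lra.
Qed.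

Lemma lam_le_ratio (k : nat) : (1 <= k)%nat -> lam (nseq (k - 1) - 1) <= Rs * lam (nseq k - 1).
Proof.
  intros Hk. pose proof (ratio_le k Hk) as Hr. unfold ratio in Hr.
  pose proof (lam_pos (nseq k - 1)).
  replace (lam (nseq (k - 1) - 1))
    with (lam (nseq (k - 1) - 1) / lam (nseq k - 1) * lam (nseq k - 1)) by (field; lra).
  apply Rmult_le_compat_r; [lra | exact Hr].
Qed.

Lemma spike_weight_succ_le (J : nat) : spike_weight (S J) <= b * Rs * spike_weight J.
Proof.
  unfold spike_weight. pose proof (lam_le_ratio (S J) ltac:(lia)) as Hr.
  replace (S J - 1)%nat with J in Hr by lia.
  set (l := lam (nseq J - 1)) in *. set (l' := lam (nseq (S J) - 1)) in *.
  assert (0 < l) by apply lam_pos. assert (0 < l') by apply lam_pos.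
  assert (0 <= b * b ^ J / (l' * l))
    by (apply Rdiv_le_0_compat; [apply Rmult_le_pos, pow_le | apply Rmult_lt_0_compat]; lra).
  replace (b ^ S J / l') with (b * b ^ J / (l' * l) * l) by (simpl; field; lra).
  replace (b * Rs * (b ^ J / l)) with (b * b ^ J / (l' * l) * (Rs * l')) by (field; lra).
  apply Rmult_le_compat_l; assumption.
Qed.

Lemma spike_norm_sq_succ_le (J : nat) : (1 <= J)%nat ->
  spike_norm_sq (S J) <= (1 + b ^ 2 * Rs ^ 2) * spike_norm_sq J.
Proof.
  intros HJ. unfold spike_norm_sq.
  rewrite (sum_n_m_split _ 1 J (S J)), sum_n_n by lia.
  rewrite (sum_n_m_split _ 1 (J - 1) J) by lia. replace (S (J - 1)) with J by lia.
  rewrite sum_n_n.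
  assert (Hw : 0 <= spike_weight (S J)).
  { apply Rdiv_le_0_compat; [apply pow_le; lra | apply lam_pos]. }
  assert (Hstep : spike_weight (S J) ^ 2 <= b ^ 2 * Rs ^ 2 * spike_weight J ^ 2).
  { replace (b ^ 2 * Rs ^ 2 * spike_weight J ^ 2) with ((b * Rs * spike_weight J) ^ 2) by ring.
    apply pow_incr. split; [exact Hw | apply spike_weight_succ_le]. }
  assert (0 <= sum_n_m (fun i => spike_weight i ^ 2) 1 (J - 1))
    by (apply sum_n_m_nonneg; intros; apply pow2_ge_0).
  assert (0 <= b ^ 2 * Rs ^ 2) by (apply Rmult_le_pos; apply pow2_ge_0).
  nra.
Qed.

Lemma sigma_sq_le_block (f : nat -> R) (i : nat) : (1 <= i)%nat ->
  sigma_sq f i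
  <= (Rs * lam (nseq i - 1)) ^ 2 * sum_n_m (fun m => f m ^ 2) (nseq (i - 1)) (nseq i - 1).
Proof.
  intros Hi. unfold sigma_sq. rewrite <- sum_n_m_scal. apply sum_n_m_le_loc. intros k Hk.
  pose proof (nseq_pos (i - 1)).
  assert (Hlam : lam k <= Rs * lam (nseq i - 1)).
  { pose proof (lam_le_ratio i Hi). pose proof (lam_le (nseq (i - 1) - 1) k ltac:(lia)). lra. }
  pose proof (lam_pos k).
  replace ((lam k * f k) ^ 2) with (lam k ^ 2 * f k ^ 2) by ring.
  apply Rmult_le_compat_r; [apply pow2_ge_0 | apply pow_incr; lra].
Qed.

Lemma sigma_sq_decay (f : nat -> R) (i M : nat) : inC lam nseq a b f -> (1 <= i <= M)%nat ->
  sigma_sq f M <= a ^ 2 * (b ^ (M - i)) ^ 2 * sigma_sq f i.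
Proof.
  intros [_ Hcone] Hi. destruct (Nat.eq_dec i M) as [-> | Hne].
  - rewrite Nat.sub_diag, pow_O. pose proof (sigma_sq_nonneg f M).
    assert (1 <= a ^ 2) by nra. nra.
  - specialize (Hcone i (M - i)%nat ltac:(lia) ltac:(lia)).
    replace (i + (M - i))%nat with M in Hcone by lia.
    replace (a ^ 2 * (b ^ (M - i)) ^ 2) with ((a * b ^ (M - i)) ^ 2) by ring.
    apply le_mul_sq_of_sqrt_le; [apply sigma_sq_nonneg | apply sigma_sq_nonneg | exact Hcone].
Qed.

Lemma spike_norm_sq_mul_sigma_sq_le (f : nat -> R) (M : nat) :
  inC lam nseq a b f -> (1 <= M)%nat ->
  spike_norm_sq M * sigma_sq f M
  <= a ^ 2 * Rs ^ 2 * (b ^ M) ^ 2 * sum_n_m (fun m => f m ^ 2) (nseq 0) (nseq M - 1).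
Proof.
  intros Hf HM. unfold spike_norm_sq.
  rewrite Rmult_comm, <- sum_n_m_scal, sum_n_m_blocks, <- sum_n_m_scal.
  apply sum_n_m_le_loc. intros i Hi.
  set (B := sum_n_m (fun m => f m ^ 2) (nseq (i - 1)) (nseq i - 1)).
  set (l := lam (nseq i - 1)).
  assert (Hl : 0 < l) by apply lam_pos.
  assert (HB : 0 <= B) by (apply sum_n_m_nonneg; intros; apply pow2_ge_0).
  apply Rle_trans with (a ^ 2 * (b ^ (M - i)) ^ 2 * ((Rs * l) ^ 2 * B) * spike_weight i ^ 2).
  - apply Rmult_le_compat_r; [apply pow2_ge_0|].
    eapply Rle_trans; [apply (sigma_sq_decay f i M); [exact Hf | lia]|].
    apply Rmult_le_compat_l; [apply Rmult_le_pos; apply pow2_ge_0 | apply sigma_sq_le_block; lia].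
  - right. unfold spike_weight. fold l.
    assert (HbM : b ^ M = b ^ i * b ^ (M - i)) by (rewrite <- pow_add; f_equal; lia).
    rewrite HbM. field. lra.
Qed.

Definition omega : R := delta * (1 - b ^ 2) / (a ^ 2 * (1 + Rs ^ 2)).

Lemma omega_pos : 0 < omega.
Proof.
  destruct delta_bounds as [Hd _]. unfold omega.
  apply Rdiv_lt_0_compat; [apply Rmult_lt_0_compat; nra|].
  apply Rmult_lt_0_compat; [nra | pose proof (pow2_ge_0 Rs); lra].
Qed.

Lemma omega_sq_le : omega ^ 2 * (a ^ 4 * (1 + b ^ 2 * Rs ^ 2) * Rs ^ 2) <= delta ^ 2 * (1 - b ^ 2).
Proof.
  destruct delta_bounds as [Hd _]. unfold omega.
  assert (Hb2 : 0 < 1 - b ^ 2 <= 1) by nra.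
  assert (HR : 0 <= Rs ^ 2) by apply pow2_ge_0.
  assert (Hgrowth : (1 + b ^ 2 * Rs ^ 2) * Rs ^ 2 <= (1 + Rs ^ 2) ^ 2) by nra.
  replace ((delta * (1 - b ^ 2) / (a ^ 2 * (1 + Rs ^ 2))) ^ 2
           * (a ^ 4 * (1 + b ^ 2 * Rs ^ 2) * Rs ^ 2))
    with (delta ^ 2 * (1 - b ^ 2) ^ 2 * ((1 + b ^ 2 * Rs ^ 2) * Rs ^ 2 / (1 + Rs ^ 2) ^ 2))
    by (field; nra).
  assert (Hfrac : (1 + b ^ 2 * Rs ^ 2) * Rs ^ 2 / (1 + Rs ^ 2) ^ 2 <= 1).
  { assert (HP : 0 < (1 + Rs ^ 2) ^ 2) by (apply pow_lt; lra).
    unfold Rdiv. apply Rle_trans with ((1 + Rs ^ 2) ^ 2 * / (1 + Rs ^ 2) ^ 2).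
    - apply Rmult_le_compat_r; [apply Rlt_le, Rinv_0_lt_compat, HP | exact Hgrowth].
    - rewrite Rinv_r by lra. lra. }
  apply Rle_trans with (delta ^ 2 * (1 - b ^ 2) ^ 2 * 1).
  - apply Rmult_le_compat_l; [apply Rmult_le_pos; apply pow2_ge_0 | exact Hfrac].
  - pose proof (pow2_ge_0 delta). nra.
Qed.

Lemma Atilde_late_stop_mass (f : nat -> R) (eps rho : R) (M : nat) :
  inC lam nseq a b f -> nrm f <= rho -> (1 <= M)%nat -> 0 < eps ->
  eps * sqrt (1 - b ^ 2) / (a * b) < Defs.sigma lam nseq f M ->
  eps ^ 2 * (1 - b ^ 2) * spike_norm_sq M < a ^ 4 * Rs ^ 2 * ((b ^ S M) ^ 2 * rho ^ 2).
Proof.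
  intros Hf Hnrm HM Heps Hthr.
  assert (Hq := sigma_sq_gt_threshold f eps M Heps Hthr).
  assert (HV := spike_norm_sq_pos M HM).
  assert (HqV : spike_norm_sq M * sigma_sq f M <= a ^ 2 * Rs ^ 2 * (b ^ M) ^ 2 * rho ^ 2).
  { eapply Rle_trans; [apply spike_norm_sq_mul_sigma_sq_le; assumption|].
    apply Rmult_le_compat_l; [apply Rmult_le_pos; [apply Rmult_le_pos |]; apply pow2_ge_0|].
    eapply Rle_trans; [apply sum_n_m_le_Series; [intros; apply pow2_ge_0 | apply Hf]|].
    apply le_sq_of_sqrt_le, Hnrm. }
  apply Rlt_le_trans with (a ^ 2 * b ^ 2 * (spike_norm_sq M * sigma_sq f M)).
  - rewrite (Rmult_comm (spike_norm_sq M)), <- Rmult_assoc. apply Rmult_lt_compat_r; assumption.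
  - replace (a ^ 4 * Rs ^ 2 * ((b ^ S M) ^ 2 * rho ^ 2))
      with (a ^ 2 * b ^ 2 * (a ^ 2 * Rs ^ 2 * (b ^ M) ^ 2 * rho ^ 2)) by (simpl; ring).
    apply Rmult_le_compat_l; [nra | exact HqV].
Qed.

Lemma Atilde_late_stop_gap (f : nat -> R) (eps rho : R) (J : nat) :
  inC lam nseq a b f -> nrm f <= rho -> (2 <= J)%nat -> 0 < eps ->
  eps * sqrt (1 - b ^ 2) / (a * b) < Defs.sigma lam nseq f (J - 1) ->
  (omega * eps) ^ 2 * spike_norm_sq J < (delta * rho * b ^ J) ^ 2.
Proof.
  intros Hf Hnrm HJ Heps Hthr. destruct J as [|M]; [lia|].
  replace (S M - 1)%nat with M in Hthr by lia.
  assert (Hmass := Atilde_late_stop_mass f eps rho M Hf Hnrm ltac:(lia) Heps Hthr).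
  assert (HU := spike_norm_sq_succ_le M ltac:(lia)).
  assert (Hb2 : 0 < 1 - b ^ 2) by nra.
  assert (Hgrow : 0 < omega ^ 2 * (1 + b ^ 2 * Rs ^ 2)).
  { pose proof (pow_lt _ 2 omega_pos). pose proof (pow2_ge_0 (b * Rs)). nra. }
  assert (HP : 0 <= (b ^ S M) ^ 2 * rho ^ 2) by (apply Rmult_le_pos; apply pow2_ge_0).
  apply (Rmult_lt_reg_r (1 - b ^ 2)); [exact Hb2|].
  apply Rle_lt_trans
    with (omega ^ 2 * (1 + b ^ 2 * Rs ^ 2) * (eps ^ 2 * (1 - b ^ 2) * spike_norm_sq M)).
  - replace ((omega * eps) ^ 2 * spike_norm_sq (S M) * (1 - b ^ 2))
      with (omega ^ 2 * eps ^ 2 * (1 - b ^ 2) * spike_norm_sq (S M)) by ring.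
    replace (omega ^ 2 * (1 + b ^ 2 * Rs ^ 2) * (eps ^ 2 * (1 - b ^ 2) * spike_norm_sq M))
      with (omega ^ 2 * eps ^ 2 * (1 - b ^ 2) * ((1 + b ^ 2 * Rs ^ 2) * spike_norm_sq M)) by ring.
    apply Rmult_le_compat_l; [|exact HU].
    apply Rmult_le_pos; [apply Rmult_le_pos; apply pow2_ge_0 | lra].
  - eapply Rlt_le_trans; [apply Rmult_lt_compat_l; [exact Hgrow | exact Hmass]|].
    replace (omega ^ 2 * (1 + b ^ 2 * Rs ^ 2) * (a ^ 4 * Rs ^ 2 * ((b ^ S M) ^ 2 * rho ^ 2)))
      with (omega ^ 2 * (a ^ 4 * (1 + b ^ 2 * Rs ^ 2) * Rs ^ 2) * ((b ^ S M) ^ 2 * rho ^ 2))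
      by ring.
    replace ((delta * rho * b ^ S M) ^ 2 * (1 - b ^ 2))
      with (delta ^ 2 * (1 - b ^ 2) * ((b ^ S M) ^ 2 * rho ^ 2)) by ring.
    apply Rmult_le_compat_r; [exact HP | apply omega_sq_le].
Qed.

End RatioBound.

End Problem.

Theorem theorem3 :
  forall (a b Rsup : R), 0 < b < 1 -> 1 < a ->
  exists omega : R, 0 < omega /\
  forall (lam : nat -> R) (nseq : nat -> nat),
    (forall i, 0 < lam i) ->
    (forall i, lam (S i) <= lam i) ->
    is_lim_seq lam 0 ->
    (forall k, (nseq k < nseq (S k))%nat) ->
    (1 <= nseq 0)%nat ->
    is_lub (fun x => exists k, (1 <= k)%nat /\ x = ratio lam nseq k) Rsup ->
    forall eps rho, 0 < eps -> 0 < rho ->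
      Rbar_le (cost (Atilde lam nseq a b) (inC lam nseq a b) eps rho)
              (complexity lam (inC lam nseq a b) (omega * eps) rho).
Proof.
  intros a b Rsup Hb Ha.
  exists (omega a b Rsup). split; [exact (omega_pos a b Hb Ha Rsup)|].
  intros lam nseq Hlam Hanti _ Hincr H0 Hlub eps rho Heps Hrho.
  assert (Hratio : forall k, (1 <= k)%nat -> ratio lam nseq k <= Rsup)
    by (intros k Hk; apply (proj1 Hlub); exists k; auto).
  assert (He : 0 < omega a b Rsup * eps)
    by (apply Rmult_lt_0_compat; [apply omega_pos |]; assumption).
  apply cost_le_complexity. intros f k Hf Hnrm Hstop A Hsol.
  destruct (Atilde_stops_at_block lam nseq a b Hincr H0 eps f k Hstop) as [J [HJ [<- Hlate]]].
  destruct (Nat.eq_dec J 1) as [-> | HJ1].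
  - apply zero_instance_samples_ge; auto. lra.
  - apply hard_instance_samples_ge; auto.
    apply (Atilde_late_stop_gap lam nseq a b Hlam Hincr H0 Hb Ha Rsup Hanti Hratio f);
      auto; [lia | apply Hlate; lia].
Qed.
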